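(* Let $A\in SL(3,\mathbb{Z})$ be hyperbolic (no eigenvalue of modulus $1$). If $B\in SL(3,\mathbb{Z})$ satisfies $AB=BA$, then either $B=\mathrm{Id}$ or $B$ is hyperbolic. *)

From mathcomp Require Import all_boot all_order all_algebra all_field.
Set Implicit Arguments. Unset Strict Implicit. Unset Printing Implicit Defensive.
Import Order.TTheory GRing.Theory Num.Theory.
Local Open Scope ring_scope.

Definition inSL (n : nat) (A : 'M[int]_n) : Prop := \det A = 1.

(* Complexification of an integer matrix (entries in algC, the algebraic complex numbers;
   eigenvalues of integer matrices are algebraic, so this loses nothing). *)
Definition cplx_mx (n : nat) (A : 'M[int]_n) : 'M[algC]_n := map_mx (fun z : int => z%:~R) A.

Definition hyperbolic (n : nat) (A : 'M[int]_n) : Prop :=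
  forall z : algC, eigenvalue (cplx_mx A) z -> `|z| != 1.

From mathcomp Require Import all_boot all_order all_algebra all_field.
From mathcomp Require Import ring zify.
Set Implicit Arguments. Unset Strict Implicit. Unset Printing Implicit Defensive.
Import Order.TTheory GRing.Theory Num.Theory.
Local Open Scope ring_scope.

(* Let A be hyperbolic in SL(3,Z) and B in SL(3,Z) commute with A,
   B <> 1.  Suppose B has an eigenvalue z with |z| = 1.
   (1) Since the characteristic polynomial z^3 + a z^2 + b z - 1 of B has
       integer coefficients and conj z = 1/z, conjugating p(z) = 0 gives
       (a + b) z (z + 1) = 0, so 1 or -1 is a root of p: B has an integer
       eigenvalue m = +-1.
   (2) A hyperbolic unimodular integer matrix has no rational eigenvalue: such
       an eigenvalue r is an algebraic integer, hence an integer, and so is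
       1/r (an eigenvalue of the inverse \adj A), hence |r| = 1.  Consequently
       A leaves no rational line invariant.
   (3) C := B - m lies in the commutant of A, so ker C and the row space of C
       are A-invariant rational subspaces.  In dimension 3 one of them is a
       line unless C = 0; by (2), C = 0, i.e. B = m.
   (4) det B = 1 rules out B = -1, so B = 1, a contradiction. *)

Section IntegerMatrices.
Variable n : nat.

(* The rational image of an integer matrix; eigenvectors for rational
   eigenvalues can be found over Q, where [mxalgebra] applies. *)
Definition qmx (M : 'M[int]_n) : 'M[rat]_n := map_mx (fun z : int => z%:~R) M.

Lemma cplx_qmx (M : 'M[int]_n) : cplx_mx M = map_mx ratr (qmx M).
Proof. by apply/matrixP => i j; rewrite !mxE ratr_int. Qed.

Lemma qmxM (M N : 'M[int]_n) : qmx (M *m N) = qmx M *m qmx N.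
Proof. exact: map_mxM. Qed.

Lemma int_root_eigenvalue (B : 'M[int]_n) (m : int) :
  root (char_poly B) m -> eigenvalue (qmx B) m%:~R.
Proof.
move/eqP=> pm; rewrite eigenvalue_root_char /qmx -map_char_poly /root.
by rewrite -[m%:~R]/(intr m : rat) horner_map pm rmorph0.
Qed.

Lemma qmx_scalar (B : 'M[int]_n) (m : int) : qmx B = (m%:~R)%:M -> B = m%:M.
Proof.
move/matrixP=> E; apply/matrixP => i j; apply: (@intr_inj rat).
by have := E i j; rewrite !mxE => ->; case: (i == j); rewrite /= ?rmorph0.
Qed.

Lemma eigenvalue_qmx_cplx (M : 'M[int]_n) (v : 'rV[rat]_n) r :
  v != 0 -> v *m qmx M = r *: v -> eigenvalue (cplx_mx M) (ratr r).
Proof.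
move=> v0 hv; apply/eigenvalueP; exists (map_mx ratr v).
  by rewrite cplx_qmx -map_mxM hv map_mxZ.
by rewrite map_mx_eq0.
Qed.

(* Eigenvalues of an integer matrix are algebraic integers: they are roots of
   the monic integer characteristic polynomial. *)
Lemma eigenvalue_Aint (M : 'M[int]_n) z : eigenvalue (cplx_mx M) z -> z \in Aint.
Proof.
rewrite eigenvalue_root_char /cplx_mx -map_char_poly => hz.
apply: (root_monic_Aint hz).
  apply/monicP; rewrite lead_coef_map_inj ?(monicP (char_poly_monic M)) ?rmorph1 //.
  exact: intr_inj.
by apply/polyOverP => i; rewrite coef_map /= rpred_int.
Qed.

Lemma rat_eigenvalue_int (M : 'M[int]_n) (v : 'rV[rat]_n) r :
  v != 0 -> v *m qmx M = r *: v -> (ratr r : algC) \in Num.int.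
Proof.
move=> v0 hv; apply: Cint_rat_Aint; first exact: Crat_rat.
exact: eigenvalue_Aint (eigenvalue_qmx_cplx v0 hv).
Qed.

(* A hyperbolic matrix of SL(n,Z) has no rational eigenvalue: r and 1/r
   (an eigenvalue of the integer inverse \adj A) are both nonzero integers. *)
Lemma hyperbolic_no_rat_eigenvalue (A : 'M[int]_n) (v : 'rV[rat]_n) r :
  inSL A -> hyperbolic A -> v != 0 -> v *m qmx A = r *: v -> False.
Proof.
move=> hA hypA v0 hv.
have invA : qmx A *m qmx (\adj A) = 1%:M.
  by rewrite -qmxM mul_mx_adj hA /qmx map_mx1.
have vK : v = r *: (v *m qmx (\adj A)).
  by rewrite scalemxAl -hv -mulmxA invA mulmx1.
have r0 : r != 0 by apply: contra v0 => /eqP r0; rewrite vK r0 scale0r.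
have hv' : v *m qmx (\adj A) = r^-1 *: v.
  by rewrite {2}vK scalerA mulVf // scale1r.
have x0 : (ratr r : algC) != 0 by rewrite fmorph_eq0.
have ge1 := norm_intr_ge1 (rat_eigenvalue_int v0 hv) x0.
have := norm_intr_ge1 (rat_eigenvalue_int v0 hv').
rewrite fmorphV => /(_ (invr_neq0 x0)).
rewrite normfV invf_ge1 ?normr_gt0 // => le1.
have /eqP := hypA _ (eigenvalue_qmx_cplx v0 hv); apply.
by apply/le_anti; rewrite ge1 le1.
Qed.

Lemma invariant_line_eigenvector (Q S : 'M[rat]_n) :
  \rank S = 1%N -> (S *m Q <= S)%MS ->
  exists v : 'rV_n, exists r, v != 0 /\ v *m Q = r *: v.
Proof.
move=> rS hS.
have [i ri] : exists i, row i S != 0.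
  case: (pickP (fun i => row i S != 0)) => [i hi|h]; first by exists i.
  suff S0 : S = 0 by rewrite S0 mxrank0 in rS.
  by apply/row_matrixP => i; have := h i; rewrite row0 => /negbFE/eqP.
have eqvS : (row i S :=: S)%MS.
  have := mxrank_leqif_eq (row_sub i S).
  by rewrite rank_rV ri rS => -[_ /esym]; rewrite eqxx => /eqmxP.
have inv : (row i S *m Q <= row i S)%MS by rewrite (eqmxMr Q eqvS) eqvS hS.
by case/sub_rVP: inv => r hr; exists (row i S), r.
Qed.

Lemma hyperbolic_no_invariant_line (A : 'M[int]_n) (S : 'M[rat]_n) :
  inSL A -> hyperbolic A -> \rank S = 1%N -> (S *m qmx A <= S)%MS -> False.
Proof.
move=> hA hypA rS hS; have [v [r [v0 hv]]] := invariant_line_eigenvector rS hS.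
exact: hyperbolic_no_rat_eigenvalue hA hypA v0 hv.
Qed.

End IntegerMatrices.

(* In dimension 3, a matrix commuting with a hyperbolic A in SL(3,Z) and having a
   rational eigenvalue c is the scalar c: otherwise the kernel or the row space
   of B - c would be an A-invariant rational line. *)
Lemma commuting_rat_eigenvalue_scalar (A B : 'M[int]_3) (c : rat) :
  inSL A -> hyperbolic A -> A *m B = B *m A ->
  eigenvalue (qmx B) c -> qmx B = c%:M.
Proof.
move=> hA hypA hAB hc.
set C := qmx B - c%:M.
have comm : C *m qmx A = qmx A *m C.
  by rewrite /C mulmxBl mulmxBr scalar_mxC -!qmxM hAB.
have noline := hyperbolic_no_invariant_line hA hypA.
have rK := mxrank_ker C.
have : (\rank C <= 3)%N by exact: rank_leq_col.
case rC: (\rank C) rK => [|[|[|[|k]]]] rK // _.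
- by apply/eqP; rewrite -subr_eq0 -mxrank_eq0 rC.
- by exfalso; apply: (noline C rC); rewrite comm submxMl.
- exfalso; apply: (noline (kermx C)); first by rewrite rK.
  by rewrite sub_kermx -mulmxA -comm mulmxA mulmx_ker mul0mx.
- by move: hc; rewrite /eigenvalue -/C -mxrank_eq0 rK.
Qed.

Lemma norm1_neq0 (z : algC) : `|z| = 1 -> z != 0.
Proof. by move=> nz; rewrite -normr_gt0 nz ltr01. Qed.

(* A root z on the unit circle of X^3 + a X^2 + b X - 1 with integer a, b
   satisfies (a + b) z (z + 1) = 0: conjugating the equation (conj z = 1/z)
   and multiplying by z^3 gives the reciprocal equation, and the two differ by
   (a + b) z (z + 1). *)
Lemma unit_root_reciprocal_cubic (a b : int) (z : algC) : `|z| = 1 ->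
  -1 + b%:~R * z + a%:~R * z^+2 + z^+3 = 0 -> (b + a)%:~R * z * (z + 1) = 0.
Proof.
move=> nz Pz.
have z0 := norm1_neq0 nz.
have zc : z^* = z^-1 by rewrite invC_norm nz expr1n invr1 mul1r.
have Pzc := congr1 Num.conj Pz.
rewrite !(rmorphD, rmorphM, rmorphXn, rmorph0, rmorphN1) /= in Pzc.
rewrite zc !conj_intr ?rpred_int // in Pzc.
rewrite intrD; transitivity ((-1 + b%:~R * z + a%:~R * z ^+ 2 + z ^+ 3)
    + z^+3 * (-1 + b%:~R / z + a%:~R * (z^-1 / z) + z^-1 * (z^-1 / z))).
  by field.
by rewrite Pz Pzc mulr0 addr0.
Qed.

(* If B in SL(3,Z) has an eigenvalue on the unit circle, then 1 or -1 is a root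
   of its characteristic polynomial p = X^3 + a X^2 + b X - 1, since a + b = 0
   means p(1) = 0. *)
Lemma unimodular_eigenvalue_pm1 (B : 'M[int]_3) (z : algC) :
  inSL B -> eigenvalue (cplx_mx B) z -> `|z| = 1 ->
  exists2 m : int, (m == 1) || (m == -1) & root (char_poly B) m.
Proof.
move=> hB hz nz.
rewrite eigenvalue_root_char /cplx_mx -map_char_poly in hz.
set p := char_poly B in hz *.
have sp : size p = 4%N := size_char_poly B.
have p3 : p`_3 = 1.
  by have := monicP (char_poly_monic B); rewrite /lead_coef -/p sp.
have p0 : p`_0 = -1 by rewrite char_poly_det hB.
have z0 := norm1_neq0 nz.
have hz' := hz.
move: hz; rewrite /root (horner_coef_wide (n := 4)); last first.
  by rewrite size_map_inj_poly ?sp //; exact: intr_inj.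
rewrite !big_ord_recl big_ord0 !coef_map /= p0 p3 => /eqP pz.
have Pz : -1 + (p`_1)%:~R * z + (p`_2)%:~R * z^+2 + z^+3 = 0.
  by rewrite -pz /bump /= rmorphN1 rmorph1; ring.
move/eqP: (unit_root_reciprocal_cubic nz Pz); rewrite !mulf_eq0 (negbTE z0) orbF => /orP[ab0|z1].
  exists 1; rewrite ?eqxx //.
  rewrite intr_eq0 in ab0; move/eqP: ab0 => ab0.
  rewrite /root (horner_coef_wide (n := 4)) ?sp //.
  rewrite !big_ord_recl big_ord0 /bump /= p0 p3 !expr1n !mulr1.
  change (-1 + (p`_1 + (p`_2 + (1 + 0))) == 0 :> int); apply/eqP; lia.
exists (-1); first by rewrite orbC eqxx.
move: hz'; rewrite addr_eq0 in z1.
by rewrite /root (eqP z1) -(rmorphN1 (intr : int -> algC)) horner_map intr_eq0.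
Qed.

Theorem mainTheorem13 (A B : 'M[int]_3) :
  inSL A -> hyperbolic A -> inSL B -> A *m B = B *m A ->
  B = 1%:M \/ hyperbolic B.
Proof.
move=> hA hypA hB hAB.
have [->|B1] := eqVneq B 1%:M; [by left | right].
move=> z hz; apply/eqP => nz.
have [m m_pm1 root_m] := unimodular_eigenvalue_pm1 hB hz nz.
have Bm : B = m%:M.
  exact/qmx_scalar/(commuting_rat_eigenvalue_scalar hA hypA hAB)/int_root_eigenvalue.
case/orP: m_pm1 => /eqP m_val; first by move: B1; rewrite Bm m_val eqxx.
by move: hB; rewrite /inSL Bm m_val det_scalar.
Qed.
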